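(* Let $\lambda>0$. For a Yule tree with rate $\lambda$ grown for time $t\ge 0$ from an initial bifurcation (the number of leaves being random), let $I(t)$ and $P(t)$ be the expected sums of the interior and pendant edge lengths respectively. Then $$I(t)=\frac{1}{\lambda}\bigl(e^{\lambda t}+e^{-\lambda t}-2\bigr),\qquad P(t)=\frac{1}{\lambda}\bigl(e^{\lambda t}-e^{-\lambda t}\bigr).$$ Consequently, defining $p(t)=P(t)/(2e^{\lambda t})$ and $i(t)=I(t)/(2e^{\lambda t}-2)$ for $t>0$ (the average pendant and interior edge lengths when the number of leaves takes its expected value $2e^{\lambda t}$), the ratio $p(t)/i(t)$ converges to $1$ exponentially fast as $t\to\infty$: there exist constants $C,c>0$ with $|p(t)/i(t)-1|\le Ce^{-ct}$ for all $t>0$. *)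

From HB Require Import structures.
From mathcomp Require Import all_boot all_order all_algebra.
From mathcomp Require Import all_classical all_reals all_analysis.
Set Implicit Arguments. Unset Strict Implicit. Unset Printing Implicit Defensive.
Import Order.TTheory GRing.Theory Num.Theory.
Import numFieldNormedType.Exports.
Local Open Scope classical_set_scope.
Local Open Scope ring_scope.

(* Yule tree with birth rate [lam], grown on [0, t] from an initial
   bifurcation at time 0.  A history of the process is described by the
   successive split times s_1 < ... < s_n in (0, t] and, at the j-th split,
   the index of the splitting lineage among the j+1 current ones.
   The state carried along is:
     - [bs]  : the list of birth times of the currently alive lineages
               (initially [:: 0; 0], the two edges out of the root),
     - [acc] : the accumulated length of interior edges (an edge becomes
               interior when its lineage splits: it has length s - birth).
   At time t the pendant edge lengths are t - b for b in bs.

   Each lineage splits independently at rate lam, so the density of a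
   history with n splits w.r.t. Lebesgue measure on the split times and
   counting measure on lineage choices is
     lam^n * exp(- lam * \int_0^t N(s) ds),  N(s) = number of lineages.
   [yuleG n u bs acc] is the contribution of the histories with exactly n
   further splits after time u, given the state at time u, to the
   expectation of the functional [f]; it is written as the iterated
   integral of this density. *)

Definition split_lineage (R : realType) (bs : seq R) (i : nat) (s : R) : seq R :=
  s :: s :: (take i bs ++ drop i.+1 bs).

Fixpoint yuleG (R : realType) (lam t : R) (f : seq R -> R -> \bar R)
    (n : nat) (u : R) (bs : seq R) (acc : R) {struct n} : \bar R :=
  match n with
  | 0 => ((expR (- lam * (size bs)%:R * (t - u)))%:E * f bs acc)%E
  | n'.+1 =>
      integral (@lebesgue_measure R) `[u, t]%classic (fun s : R =>
        (\sum_(i < size bs)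
            ((lam * expR (- lam * (size bs)%:R * (s - u)))%:E
             * yuleG lam t f n' s (split_lineage bs i s)
                     (acc + (s - nth 0 bs i))%R))%E)
  end.

Definition yule_expect (R : realType) (lam t : R) (f : seq R -> R -> \bar R)
  : \bar R :=
  (\sum_(0 <= n <oo) yuleG lam t f n 0%R [:: 0%R; 0%R] 0%R)%E.

Definition yule_I (R : realType) (lam t : R) : \bar R :=
  yule_expect lam t (fun _ acc => acc%:E).

Definition yule_P (R : realType) (lam t : R) : \bar R :=
  yule_expect lam t (fun bs _ => (\sum_(b <- bs) (t - b))%:E).

Definition yule_p (R : realType) (lam t : R) : R :=
  fine (yule_P lam t) / (2 * expR (lam * t)).
Definition yule_i (R : realType) (lam t : R) : R :=
  fine (yule_I lam t) / (2 * expR (lam * t) - 2).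

From HB Require Import structures.
From mathcomp Require Import all_boot all_order all_algebra.
From mathcomp Require Import all_classical all_reals all_analysis.
From mathcomp Require Import zify ring lra.
Import Order.TTheory GRing.Theory Num.Theory.
Import numFieldNormedType.Exports.
Local Open Scope classical_set_scope.
Local Open Scope ring_scope.

(* Conditioning on the first split after time u, the contribution of the
   histories with n further splits is, for both functionals, affine in the
   state: a_n(k,u) acc + b_n(k,u) S + c_n(k,u), where k is the number of
   lineages and S the current pendant length.  The coefficients for n+1 are
   obtained from those for n by a linear integral operator [step].  The
   closed-form expectations Phi solve a linear ODE that makes them fixed
   points Phi = final Phi + step Phi, so the m-th partial sum of the series is
   Phi - step^m Phi, and step^m Phi = O(1/m) by an explicit a priori bound. *)

Section within_continuity.
Context {T : topologicalType} {R : realType} (A : set T).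

Lemma continuous_within_cst (c : R) : {within A, continuous (fun _ : T => c)}.
Proof. by move=> x; exact: cvg_cst. Qed.

Lemma continuous_withinD (f g : T -> R) :
  {within A, continuous f} -> {within A, continuous g} ->
  {within A, continuous (fun x => f x + g x)}.
Proof. by move=> cf cg x; apply: cvgD; [exact: cf|exact: cg]. Qed.

Lemma continuous_withinM (f g : T -> R) :
  {within A, continuous f} -> {within A, continuous g} ->
  {within A, continuous (fun x => f x * g x)}.
Proof. by move=> cf cg x; apply: cvgM; [exact: cf|exact: cg]. Qed.

Lemma continuous_within_norm (f : T -> R) :
  {within A, continuous f} -> {within A, continuous (fun x => `|f x|)}.
Proof. by move=> cf x; apply: cvg_norm; exact: cf. Qed.

End within_continuity.

Section real_calculus.
Context {R : realType}.
Local Notation mu := (@lebesgue_measure R).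

Lemma continuous_expR_affine (a b : R) : continuous (fun s => expR (a * (s - b))).
Proof.
move=> x; apply: continuous_comp; last exact: continuous_expR.
apply: cvgM; first exact: cvg_cst.
by apply: cvgB; [exact: cvg_id|exact: cvg_cst].
Qed.

Lemma is_derive_continuous {F f : R -> R} :
  (forall x : R, is_derive x 1 F (f x)) -> continuous F.
Proof.
move=> dF x; have [derF _] := dF x.
exact/differentiable_continuous/derivable1_diffP.
Qed.

Lemma Rintegral_is_derive {F f : R -> R} {a b : R} : a <= b ->
  (forall x : R, is_derive x 1 F (f x)) -> {within `[a, b], continuous f} ->
  \int[mu]_(x in `[a, b]) f x = F b - F a.
Proof.
rewrite le_eqVlt => /predU1P[<- _ _|ab dF cf].
  by rewrite set_itv1 Rintegral_set1 subrr.
have cF := is_derive_continuous dF.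
rewrite /Rintegral (@continuous_FTC2 _ f F a b ab cf) //.
- split.
  + by move=> x _; have [] := dF x.
  + exact/cvg_at_right_filter/cF.
  + exact/cvg_at_left_filter/cF.
- by move=> x _; have [_ <-] := dF x; rewrite derive1E.
Qed.

Lemma cvg_le_harmonic (r : nat -> R) (K : R) :
  (forall m, `|r m| <= K * harmonic m) -> r @ \oo --> 0.
Proof.
move=> hr.
have hK : (fun m => K * harmonic m) @ \oo --> (0 : R).
  by rewrite -(mulr0 K); apply: cvgM; [exact: cvg_cst|exact: cvg_harmonic].
have hK' : (fun m => - (K * harmonic m)) @ \oo --> (0 : R).
  by rewrite -oppr0; apply: cvgN.
apply: (squeeze_cvgr _ hK' hK).
by apply: nearW => m; have := hr m; rewrite ler_norml.
Qed.

End real_calculus.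

Section Yule.
Variables (R : realType) (lam t : R).
Hypotheses (lam_gt0 : 0 < lam) (t_ge0 : 0 <= t).
Local Notation mu := (@lebesgue_measure R).

Lemma lam_neq0 : lam != 0. Proof. by rewrite gt_eqF. Qed.

(* probability that none of k lineages splits during [u, s] *)
Definition survival (k : nat) (u s : R) : R := expR (- lam * k%:R * (s - u)).

Definition pendant (bs : seq R) : R := \sum_(b <- bs) (t - b).

Inductive coef := Cint | Cpend | Ccst.

(* [T c k u]: coefficient of the interior length, of the pendant length, or
   the constant term, when k lineages are alive at time u *)
Definition coefs := coef -> nat -> R -> R.

Definition affine (x : coef -> R) (acc sd : R) : R :=
  x Cint * acc + x Cpend * sd + x Ccst.

Definition eval_coefs (T : coefs) (u : R) (bs : seq R) (acc : R) : R :=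
  affine (fun c => T c (size bs) u) acc (pendant bs).

Definition coefs_add (T1 T2 : coefs) : coefs := fun c k u => T1 c k u + T2 c k u.

Definition coefs_eq (T1 T2 : coefs) : Prop :=
  forall c k u, 0 <= u -> u <= t -> T1 c k u = T2 c k u.

Definition coefs_cont (T : coefs) : Prop :=
  forall c k, {within `[0, t], continuous (T c k)}.

(* When one of k lineages born at b_i splits at s, the interior length grows
   by s - b_i and the pendant length by 2 (t - s) - (t - b_i); summing over i
   gives coefficients in terms of those for k + 1 lineages. *)
Definition source (T : coefs) : coefs := fun c k s =>
  match c with
  | Cint => k%:R * T Cint k.+1 s
  | Cpend => T Cint k.+1 s + (k%:R - 1) * T Cpend k.+1 s
  | Ccst => - k%:R * (t - s) * T Cint k.+1 s
            + 2 * k%:R * (t - s) * T Cpend k.+1 s + k%:R * T Ccst k.+1 s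
  end.

Definition first_split (k : nat) (h : R -> R) (u : R) : R :=
  \int[mu]_(s in `[u, t]) (lam * survival k u s * h s).

Definition step (T : coefs) : coefs := fun c k => first_split k (source T c k).

Definition final (Phi : coefs) : coefs := fun c k u => survival k u t * Phi c k t.

Lemma size_split_lineage (bs : seq R) i s : (i < size bs)%N ->
  size (split_lineage bs i s) = (size bs).+1.
Proof.
by move=> ib; rewrite /split_lineage /= size_cat size_take size_drop ib; lia.
Qed.

Lemma pendant_split_lineage (bs : seq R) i s : (i < size bs)%N ->
  pendant (split_lineage bs i s) = 2 * (t - s) + pendant bs - (t - nth 0 bs i).
Proof.
move=> ib; rewrite /pendant /split_lineage !big_cons big_cat /=.
rewrite -{3}(cat_take_drop i bs) big_cat /= (drop_nth 0 ib) big_cons.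
lra.
Qed.

Lemma sum_eval_split T (bs : seq R) acc s :
  \sum_(i < size bs) eval_coefs T s (split_lineage bs i s) (acc + (s - nth 0 bs i)) =
  affine (fun c => source T c (size bs) s) acc (pendant bs).
Proof.
set k := size bs.
set a := T Cint k.+1 s; set b := T Cpend k.+1 s; set c := T Ccst k.+1 s.
transitivity (\sum_(i < k) ((a * acc - a * (t - s) + b * (2 * (t - s) + pendant bs) + c)
   + (a - b) * (t - nth 0 bs i))).
  apply: eq_bigr => i _.
  rewrite /eval_coefs /affine size_split_lineage // pendant_split_lineage // -/a -/b -/c.
  ring.
rewrite big_split /= -big_distrr /= sumr_const card_ord.
have -> : \sum_(i < k) (t - nth 0 bs i) = pendant bs.
  by rewrite /pendant (big_nth 0) big_mkord.
by rewrite /affine /source -/a -/b -/c -[_ *+ k]mulr_natr; ring.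
Qed.

Lemma continuous_survival k u (A : set R) : {within A, continuous (survival k u)}.
Proof. exact/continuous_subspaceT/continuous_expR_affine. Qed.

Lemma continuous_survival_end k (A : set R) :
  {within A, continuous (fun u => survival k u t)}.
Proof.
have -> : (fun u => survival k u t) = fun u => expR (lam * k%:R * (u - t)).
  by apply/funext => u; rewrite /survival; congr expR; ring.
exact/continuous_subspaceT/continuous_expR_affine.
Qed.

Lemma continuous_within_subitv (f : R -> R) u : 0 <= u ->
  {within `[0, t], continuous f} -> {within `[u, t], continuous f}.
Proof.
move=> u0; apply: continuous_subspaceW => x /=; rewrite !in_itv /= => /andP[ux ->].
by rewrite (le_trans u0 ux).
Qed.

Lemma integrable_within {f : R -> R} {u : R} : 0 <= u ->
  {within `[0, t], continuous f} -> mu.-integrable `[u, t] (EFin \o f).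
Proof.
move=> u0 cf; apply: continuous_compact_integrable; first exact: segment_compact.
exact: continuous_within_subitv.
Qed.

Lemma continuous_kernel k u (h : R -> R) : {within `[0, t], continuous h} ->
  {within `[0, t], continuous (fun s => lam * survival k u s * h s)}.
Proof.
move=> ch; apply: continuous_withinM => //.
by apply: continuous_withinM; [exact: continuous_within_cst|exact: continuous_survival].
Qed.

Lemma integrable_kernel k u (h : R -> R) : 0 <= u ->
  {within `[0, t], continuous h} ->
  mu.-integrable `[u, t] (EFin \o (fun s => lam * survival k u s * h s)).
Proof. by move=> u0 ch; apply: integrable_within => //; exact: continuous_kernel. Qed.

Lemma continuous_affine (A : set R) (h : coef -> R -> R) acc sd :
  (forall c, {within A, continuous (h c)}) ->
  {within A, continuous (fun s => affine (fun c => h c s) acc sd)}.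
Proof.
move=> ch; rewrite /affine.
apply: continuous_withinD; last exact: ch.
by apply: continuous_withinD; apply: continuous_withinM;
  (exact: ch || exact: continuous_within_cst).
Qed.

Lemma continuous_source T c k : coefs_cont T ->
  {within `[0, t], continuous (source T c k)}.
Proof.
move=> cT; have ct : {within `[0, t], continuous (fun s : R => t - s)}.
  by apply: continuous_subspaceT => x; apply: cvgB; [exact: cvg_cst|exact: cvg_id].
have cst (r : R) := continuous_within_cst `[0, t] r.
case: c; rewrite /source.
- exact: continuous_withinM (cT _ _).
- by apply: continuous_withinD (cT _ _) _; apply: continuous_withinM (cT _ _).
- apply: continuous_withinD; first apply: continuous_withinD.
  + by apply: continuous_withinM (cT _ _); apply: continuous_withinM ct.
  + by apply: continuous_withinM (cT _ _); apply: continuous_withinM ct.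
  + exact: continuous_withinM (cT _ _).
Qed.

Lemma continuous_first_split k (h : R -> R) : {within `[0, t], continuous h} ->
  {within `[0, t], continuous (first_split k h)}.
Proof.
move=> ch; pose g s := survival k 0 s * h s.
have cg : {within `[0, t], continuous g}.
  by apply: continuous_withinM => //; exact: continuous_survival.
have ig := integrable_within (lexx 0) cg.
(* the moving lower bound is handled by a parameterized integral of g *)
apply: (@subspace_eq_continuous _ _ _ (fun u => lam * expR (lam * k%:R * (u - 0)) *
   (\int[mu]_(s in `[0, t]) g s - parameterized_integral mu 0 u g))).
  move=> u; rewrite inE /= in_itv /= => /andP[u0 ut].
  rewrite Rintegral_itvB ?bnd_simp // Rintegral_itv_obnd_cbnd; last first.
    by apply: integrableS ig => //; apply: subset_itvr; rewrite bnd_simp.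
  rewrite /first_split -RintegralZl //; last exact: integrable_within.
  apply: eq_Rintegral => s _.
  have -> : survival k u s = expR (lam * k%:R * (u - 0)) * survival k 0 s.
    by rewrite /survival -expRD; congr expR; ring.
  by rewrite /g; ring.
apply: continuous_withinM.
  apply: continuous_withinM; first exact: continuous_within_cst.
  exact/continuous_subspaceT/continuous_expR_affine.
move=> x; apply: cvgB; first exact: cvg_cst.
exact: (parameterized_integral_continuous t_ge0 ig).
Qed.

Lemma coefs_cont_step T : coefs_cont T -> coefs_cont (step T).
Proof. by move=> cT c k; apply/continuous_first_split/continuous_source. Qed.

Lemma coefs_cont_iter_step n T : coefs_cont T -> coefs_cont (iter n step T).
Proof. by move=> cT; elim: n => //= n IH; exact: coefs_cont_step. Qed.

Lemma coefs_cont_final Phi : coefs_cont (final Phi).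
Proof.
move=> c k; apply: continuous_withinM; first exact: continuous_survival_end.
exact: continuous_within_cst.
Qed.

Lemma first_split_affine k u (h : coef -> R -> R) acc sd : 0 <= u ->
  (forall c, {within `[0, t], continuous (h c)}) ->
  affine (fun c => first_split k (h c) u) acc sd =
  \int[mu]_(s in `[u, t]) (lam * survival k u s * affine (fun c => h c s) acc sd).
Proof.
move=> u0 ch; pose K c s := lam * survival k u s * h c s.
have cK c : {within `[0, t], continuous (K c)} by exact: continuous_kernel.
have cst (r : R) := continuous_within_cst `[0, t] r.
transitivity (\int[mu]_(s in `[u, t]) (acc * K Cint s + sd * K Cpend s + K Ccst s));
  last by apply: eq_Rintegral => s _; rewrite /K /affine; ring.
rewrite RintegralD //; last 2 first.
- apply: integrable_within => //.
  by apply: continuous_withinD; apply: continuous_withinM.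
- exact: integrable_within.
rewrite RintegralD //; try by apply: integrable_within => //; apply: continuous_withinM.
rewrite !RintegralZl //; try exact: integrable_within.
by rewrite /affine /first_split -/(K Cint) mulrC [sd * _]mulrC.
Qed.

Lemma eval_step T u bs acc : coefs_cont T -> 0 <= u ->
  eval_coefs (step T) u bs acc =
  \int[mu]_(s in `[u, t]) (lam * survival (size bs) u s *
     affine (fun c => source T c (size bs) s) acc (pendant bs)).
Proof. by move=> cT u0; apply: first_split_affine => // c; exact: continuous_source. Qed.

Lemma integral_split_eval T u bs acc : coefs_cont T -> 0 <= u ->
  integral mu `[u, t] (fun s => \sum_(i < size bs)
     ((lam * survival (size bs) u s)%:E *
      (eval_coefs T s (split_lineage bs i s) (acc + (s - nth 0 bs i)))%:E)%E) =
  (eval_coefs (step T) u bs acc)%:E.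
Proof.
move=> cT u0; rewrite eval_step // /Rintegral fineK; last first.
  apply: integrable_fin_num => //; apply: integrable_kernel => //.
  by apply: continuous_affine => c; exact: continuous_source.
apply: eq_integral => s _; rewrite -sum_eval_split mulr_sumr -sumEFin.
by apply: eq_bigr => i _; rewrite EFinM.
Qed.

Lemma yuleG_eval {f : seq R -> R -> \bar R} {Phi : coefs} :
  (forall bs acc, f bs acc = (eval_coefs Phi t bs acc)%:E) ->
  forall n u bs acc, 0 <= u ->
  yuleG lam t f n u bs acc = (eval_coefs (iter n step (final Phi)) u bs acc)%:E.
Proof.
move=> hf; elim=> [|n IH] u bs acc u0.
  by rewrite /= hf -EFinM /eval_coefs /affine /final /survival; congr EFin; ring.
rewrite /= -integral_split_eval //; last exact/coefs_cont_iter_step/coefs_cont_final.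
apply: eq_integral => s; rewrite inE /= in_itv /= => /andP[us _].
by apply: eq_bigr => i _; rewrite IH // (le_trans u0 us).
Qed.

Lemma first_split_ode {k : nat} {phi H : R -> R} {u : R} : 0 <= u -> u <= t ->
  (forall s : R, is_derive s 1 phi (lam * (k%:R * phi s - H s))) ->
  {within `[0, t], continuous H} ->
  first_split k H u = phi u - survival k u t * phi t.
Proof.
move=> u0 ut dphi cH.
have dF (s : R) : is_derive s 1 (fun s => - (survival k u s * phi s))
    (lam * survival k u s * H s).
  by apply: is_derive_eq; rewrite /GRing.scale /= /survival; ring.
have cK : {within `[u, t], continuous (fun s => lam * survival k u s * H s)}.
  exact/continuous_within_subitv/continuous_kernel.
rewrite /first_split (Rintegral_is_derive ut dF cK).
by rewrite /survival subrr mulr0 expR0 mul1r; ring.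
Qed.

Definition solves_step (Phi : coefs) : Prop :=
  forall c (k : nat) (s : R), is_derive s 1 (Phi c k) (lam * (k%:R * Phi c k s - source Phi c k s)).

Lemma solves_step_cont {Phi : coefs} : solves_step Phi -> coefs_cont Phi.
Proof.
by move=> hPhi c k; apply/continuous_subspaceT/is_derive_continuous; exact: hPhi.
Qed.

Lemma solves_step_fixpoint {Phi : coefs} : solves_step Phi ->
  coefs_eq Phi (coefs_add (final Phi) (step Phi)).
Proof.
move=> hPhi c k u u0 ut; rewrite /coefs_add /final /step.
rewrite (first_split_ode u0 ut (hPhi c k)); first ring.
exact/continuous_source/solves_step_cont.
Qed.

Lemma first_split_eq k (h1 h2 : R -> R) u : 0 <= u ->
  (forall s, 0 <= s -> s <= t -> h1 s = h2 s) ->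
  first_split k h1 u = first_split k h2 u.
Proof.
move=> u0 h; apply: eq_Rintegral => s; rewrite inE /= in_itv /= => /andP[us st].
by rewrite h // (le_trans u0 us).
Qed.

Lemma first_splitD k (h1 h2 : R -> R) u : 0 <= u ->
  {within `[0, t], continuous h1} -> {within `[0, t], continuous h2} ->
  first_split k (fun s => h1 s + h2 s) u = first_split k h1 u + first_split k h2 u.
Proof.
move=> u0 c1 c2; rewrite /first_split -RintegralD //; try exact: integrable_kernel.
by apply: eq_Rintegral => s _; ring.
Qed.

Lemma coefs_eq_trans {T1 T2 T3 : coefs} : coefs_eq T1 T2 -> coefs_eq T2 T3 -> coefs_eq T1 T3.
Proof. by move=> h1 h2 c k u u0 ut; rewrite h1 // h2. Qed.

Lemma eval_coefs_eq {T1 T2 : coefs} {u : R} {bs : seq R} {acc : R} : coefs_eq T1 T2 -> 0 <= u -> u <= t ->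
  eval_coefs T1 u bs acc = eval_coefs T2 u bs acc.
Proof. by move=> h u0 ut; rewrite /eval_coefs /affine !h. Qed.

Lemma step_eq {T1 T2 : coefs} : coefs_eq T1 T2 -> coefs_eq (step T1) (step T2).
Proof.
move=> h c k u u0 ut; apply: first_split_eq => // s s0 st.
by case: c; rewrite /source !h.
Qed.

Lemma step_add T1 T2 : coefs_cont T1 -> coefs_cont T2 ->
  coefs_eq (step (coefs_add T1 T2)) (coefs_add (step T1) (step T2)).
Proof.
move=> c1 c2 c k u u0 _; rewrite [RHS]/coefs_add /step -first_splitD //;
  try exact: continuous_source.
by apply: first_split_eq => // s _ _; case: c; rewrite /source /coefs_add; ring.
Qed.

Section fixpoint_series.
Context {Phi G0 : coefs}.
Hypotheses (Phi_cont : coefs_cont Phi) (G0_cont : coefs_cont G0)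
  (Phi_fix : coefs_eq Phi (coefs_add G0 (step Phi))).

Lemma iter_step_fixpoint m :
  coefs_eq (iter m step Phi) (coefs_add (iter m step G0) (step (iter m step Phi))).
Proof.
elim: m => [|m IH] //; apply: coefs_eq_trans (step_eq IH) _.
by apply: step_add; [exact: coefs_cont_iter_step|exact: (coefs_cont_iter_step m.+1)].
Qed.

Lemma sum_eval_iter_step m u bs acc : 0 <= u -> u <= t ->
  \sum_(n < m) eval_coefs (iter n step G0) u bs acc =
  eval_coefs Phi u bs acc - eval_coefs (iter m step Phi) u bs acc.
Proof.
elim: m => [|m IH] u0 ut; first by rewrite big_ord0 subrr.
rewrite big_ord_recr /= IH // (eval_coefs_eq (iter_step_fixpoint m) u0 ut).
by rewrite /eval_coefs /affine /coefs_add; ring.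
Qed.

End fixpoint_series.

Definition admissible (u : R) (bs : seq R) (acc : R) : Prop :=
  (forall b, b \in bs -> 0 <= b <= u) /\ 0 <= acc <= (size bs)%:R * t.

Lemma admissible_init : admissible 0 [:: 0; 0] 0.
Proof.
split; first by move=> b; rewrite !inE => /orP[]/eqP->; rewrite lexx.
by rewrite lexx /= mulr_ge0.
Qed.

Lemma admissible_split u bs acc i s : admissible u bs acc -> (i < size bs)%N ->
  0 <= u -> u <= s -> s <= t ->
  admissible s (split_lineage bs i s) (acc + (s - nth 0 bs i)).
Proof.
move=> [hb /andP[a0 a1]] ib u0 us st; split.
  move=> b; rewrite /split_lineage !inE mem_cat.
  have s0 := le_trans u0 us.
  case/orP=> [/eqP->|/orP[/eqP->|/orP[/mem_take|/mem_drop]]]; rewrite ?lexx ?s0 //;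
    by move=> /hb /andP[b0 bu]; rewrite b0 (le_trans bu us).
have /hb /andP[n0 nu] := mem_nth 0 ib.
rewrite size_split_lineage // -addn1 natrD mulrDl mul1r; apply/andP; split.
  by rewrite addr_ge0 // subr_ge0 (le_trans nu us).
by rewrite lerD // lerBlDr (le_trans st) // lerDl.
Qed.

(* [first_split_tail_weight] makes this a supersolution of the tail recursion,
   which yields the O(1/m) decay of [iter m step Phi]. *)
Definition tail_weight (k : nat) (u : R) : R :=
  k%:R * k.+1%:R * expR (2 * lam * (t - u)).

Lemma continuous_tail_weight k : continuous (tail_weight k).
Proof.
have -> : tail_weight k = fun u => k%:R * k.+1%:R * expR (- (2 * lam) * (u - t)).
  by apply/funext => u; rewrite /tail_weight; congr (_ * expR _); ring.
by move=> x; apply: cvgM; [exact: cvg_cst|exact: continuous_expR_affine].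
Qed.

Lemma first_split_tail_weight k u : 0 <= u -> u <= t ->
  first_split k (fun s => k%:R * tail_weight k.+1 s) u <= tail_weight k u.
Proof.
move=> u0 ut; pose e2 s := expR (2 * lam * (t - s)).
have dF (s : R) : is_derive s 1 (fun s => - (survival k u s * e2 s))
    (lam * k.+2%:R * (survival k u s * e2 s)).
  rewrite /survival /e2; apply: is_derive_eq; rewrite /GRing.scale /=.
  by rewrite -[k.+2]addn2 natrD; ring.
have cF : {within `[u, t], continuous (fun s => lam * k.+2%:R * (survival k u s * e2 s))}.
  apply: continuous_withinM; first exact: continuous_within_cst.
  apply: continuous_withinM; first exact: continuous_survival.
  apply: continuous_subspaceT => x.
  have -> : e2 = fun s => expR (- (2 * lam) * (s - t)).
    by apply/funext => s; rewrite /e2; congr expR; ring.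
  exact: continuous_expR_affine.
have -> : first_split k (fun s => k%:R * tail_weight k.+1 s) u =
    \int[mu]_(s in `[u, t]) (k%:R * k.+1%:R * (lam * k.+2%:R * (survival k u s * e2 s))).
  by apply: eq_Rintegral => s _; rewrite /tail_weight /e2; ring.
rewrite RintegralZl //; last first.
  by apply: continuous_compact_integrable => //; exact: segment_compact.
rewrite (Rintegral_is_derive ut dF cF) /tail_weight -/(e2 u).
rewrite ler_wpM2l ?mulr_ge0 //.
rewrite /survival /e2 !subrr !mulr0 expR0 mulr1 mul1r.
by have := expR_ge0 (- lam * k%:R * (t - u)); lra.
Qed.

Lemma eval_step_le T K u bs acc : coefs_cont T -> 0 <= K ->
  0 <= u -> u <= t -> admissible u bs acc ->
  (forall s bs' acc', u <= s -> s <= t -> admissible s bs' acc' ->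
     size bs' = (size bs).+1 ->
     `|eval_coefs T s bs' acc'| <= K * tail_weight (size bs).+1 s) ->
  `|eval_coefs (step T) u bs acc| <= K * tail_weight (size bs) u.
Proof.
move=> cT K0 u0 ut hadm hT; set k := size bs.
pose F s := lam * survival k u s * affine (fun c => source T c k s) acc (pendant bs).
have cF : {within `[0, t], continuous F}.
  by apply/continuous_kernel/continuous_affine => c; exact: continuous_source.
have cW : {within `[0, t], continuous (fun s => k%:R * tail_weight k.+1 s)}.
  apply: continuous_withinM; first exact: continuous_within_cst.
  exact/continuous_subspaceT/continuous_tail_weight.
rewrite eval_step // -/k -/F.
apply: le_trans (le_normr_Rintegral _ (integrable_within u0 cF)) _ => //.
apply: le_trans (_ : _ <= \int[mu]_(s in `[u, t])
    (K * (lam * survival k u s * (k%:R * tail_weight k.+1 s)))) _; last first.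
  rewrite RintegralZl //; last exact: integrable_kernel.
  by rewrite ler_wpM2l //; exact: first_split_tail_weight.
apply: le_Rintegral => //.
- by apply: integrable_within => //; exact: continuous_within_norm.
- apply: integrable_within => //; apply: continuous_withinM.
    exact: continuous_within_cst.
  exact: continuous_kernel.
move=> s; rewrite /= in_itv /= => /andP[us st].
have kern0 : 0 <= lam * survival k u s by rewrite mulr_ge0 ?expR_ge0 // ltW.
rewrite /F -sum_eval_split mulr_sumr; apply: le_trans (ler_norm_sum _ _ _) _.
apply: le_trans (_ : _ <= \sum_(i < k) (lam * survival k u s *
    (K * tail_weight k.+1 s))) _.
  apply: ler_sum => i _; rewrite normrM ger0_norm // ler_wpM2l //.
  apply: hT => //; last exact: size_split_lineage.
  exact: admissible_split hadm (ltn_ord i) u0 us st.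
by rewrite sumr_const card_ord -mulr_natr le_eqVlt; apply/orP; left; apply/eqP; ring.
Qed.

Lemma eval_iter_step_le {Phi : coefs} {M : R} : 0 <= M -> coefs_cont Phi ->
  (forall u bs acc, 0 <= u -> u <= t -> admissible u bs acc ->
     `|eval_coefs Phi u bs acc| <= M * (size bs)%:R) ->
  forall m u bs acc, 0 <= u -> u <= t -> admissible u bs acc ->
  `|eval_coefs (iter m step Phi) u bs acc| <=
    M / (size bs + m).+1%:R * tail_weight (size bs) u.
Proof.
move=> M0 cPhi hPhi; elim=> [|m IH] u bs acc u0 ut hadm.
  rewrite addn0; apply: le_trans (hPhi _ _ _ u0 ut hadm) _.
  have -> : M / (size bs).+1%:R * tail_weight (size bs) u =
      M * (size bs)%:R * expR (2 * lam * (t - u)).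
    by rewrite /tail_weight; field; rewrite -(natrD R 1) pnatr_eq0.
  rewrite -[leLHS]mulr1 ler_wpM2l ?mulr_ge0 //.
  apply: le_trans (expR_ge1Dx _); rewrite lerDl.
  by rewrite mulr_ge0 ?subr_ge0 // mulr_ge0 // ltW.
apply: eval_step_le => //; first exact: coefs_cont_iter_step.
  by rewrite divr_ge0.
move=> s bs' acc' us st hadm' hsize.
by rewrite -addSnnS -hsize; apply: IH => //; exact: le_trans us.
Qed.

Lemma pendant_bounds (bs : seq R) : (forall b, b \in bs -> 0 <= b <= t) ->
  0 <= pendant bs <= (size bs)%:R * t.
Proof.
elim: bs => [|b bs IH] hb; first by rewrite /pendant big_nil mul0r lexx.
have /andP[b0 bt] := hb b (mem_head _ _).
have /andP[p0 p1] : 0 <= pendant bs <= (size bs)%:R * t.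
  by apply: IH => c cb; apply: hb; rewrite inE cb orbT.
rewrite /pendant big_cons -/(pendant bs) /= -addn1 natrD; apply/andP; split; lra.
Qed.

Lemma eval_coefs_le {Phi : coefs} {B : R} :
  (forall k u, 0 <= u -> u <= t ->
     [/\ `|Phi Cint k u| <= 1, `|Phi Cpend k u| <= 1 & `|Phi Ccst k u| <= k%:R * B]) ->
  forall u bs acc, 0 <= u -> u <= t -> admissible u bs acc ->
  `|eval_coefs Phi u bs acc| <= (2 * t + B) * (size bs)%:R.
Proof.
move=> hPhi u bs acc u0 ut [hbs /andP[acc0 acc1]].
have /andP[p0 p1] : 0 <= pendant bs <= (size bs)%:R * t.
  by apply: pendant_bounds => b /hbs /andP[b0 bu]; rewrite b0 (le_trans bu ut).
have [ha hb hc] := hPhi (size bs) u u0 ut.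
rewrite /eval_coefs /affine.
apply: le_trans (ler_normD _ _) _; apply: le_trans (lerD (ler_normD _ _) (lexx _)) _.
rewrite !normrM (ger0_norm acc0) (ger0_norm p0).
have := normr_ge0 (Phi Cint (size bs) u); have := normr_ge0 (Phi Cpend (size bs) u).
nra.
Qed.

Lemma yule_expect_solution {f : seq R -> R -> \bar R} {Phi : coefs} {B : R} : 0 <= B ->
  solves_step Phi ->
  (forall k u, 0 <= u -> u <= t ->
     [/\ `|Phi Cint k u| <= 1, `|Phi Cpend k u| <= 1 & `|Phi Ccst k u| <= k%:R * B]) ->
  (forall bs acc, f bs acc = (eval_coefs Phi t bs acc)%:E) ->
  yule_expect lam t f = (eval_coefs Phi 0 [:: 0; 0] 0)%:E.
Proof.
move=> B0 hPhi hB hf; have cPhi := solves_step_cont hPhi.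
set c := eval_coefs Phi 0 [:: 0; 0] 0.
pose r m := eval_coefs (iter m step Phi) 0 [:: 0; 0] 0.
have partial : (fun m => (\sum_(0 <= n < m) yuleG lam t f n 0%R [:: 0%R; 0%R] 0%R)%E) =
    EFin \o (fun m => c - r m).
  apply/funext => m /=; rewrite big_mkord.
  under eq_bigr => n _ do rewrite (yuleG_eval hf) //.
  by rewrite sumEFin (sum_eval_iter_step cPhi (coefs_cont_final Phi) (solves_step_fixpoint hPhi)).
have M0 : 0 <= 2 * t + B by rewrite addr_ge0 ?mulr_ge0.
have r0 : r @ \oo --> 0.
  apply: (@cvg_le_harmonic _ _ ((2 * t + B) * tail_weight 2 0)) => m.
  have := eval_iter_step_le M0 cPhi (eval_coefs_le hB) m _ _ _ (lexx 0) t_ge0 admissible_init.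
  move=> /le_trans; apply; rewrite /= [X in X <= _]mulrAC.
  apply: ler_wpM2l; first by rewrite mulr_ge0 // mulr_ge0 ?expR_ge0.
  by rewrite lef_pV2 ?posrE ?ltr0n // ler_nat ltnS leq_addl.
have Sc : (fun m => c - r m) @ \oo --> c.
  by rewrite -[X in _ --> X]subr0; apply: cvgB; [exact: cvg_cst|exact: r0].
rewrite /yule_expect partial EFin_lim; last by apply/cvg_ex; exists c.
by rewrite (cvg_lim _ Sc).
Qed.

Definition ep (u : R) : R := expR (lam * (t - u)).
Definition em (u : R) : R := expR (- (lam * (t - u))).

(* Expected final interior / pendant length from k lineages at time u: each
   lineage evolves as an independent Yule tree over the remaining time t - u. *)
Definition mean_int : coefs := fun c k u =>
  match c with
  | Cint => 1
  | Cpend => 1 - em u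
  | Ccst => k%:R * ((ep u + em u - 2) / (2 * lam) - (t - u) * (1 - em u))
  end.

Definition mean_pend : coefs := fun c k u =>
  match c with
  | Cint => 0
  | Cpend => em u
  | Ccst => k%:R * ((ep u - em u) / (2 * lam) - (t - u) * em u)
  end.

Lemma mean_int_solves : solves_step mean_int.
Proof.
case=> k s; rewrite /mean_int /source; apply: is_derive_eq;
  by rewrite /GRing.scale /= /ep /em ?natrS; field; rewrite ?lam_neq0.
Qed.

Lemma mean_pend_solves : solves_step mean_pend.
Proof.
case=> k s; rewrite /mean_pend /source; apply: is_derive_eq;
  by rewrite /GRing.scale /= /ep /em ?natrS; field; rewrite ?lam_neq0.
Qed.

Lemma ep_em_bounds {u : R} : 0 <= u -> u <= t ->
  1 <= ep u <= expR (lam * t) /\ 0 <= em u <= 1.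
Proof.
move=> u0 ut; have tu : 0 <= lam * (t - u) by rewrite mulr_ge0 ?subr_ge0 // ltW.
split; apply/andP; split.
- by rewrite /ep (le_trans _ (expR_ge1Dx _)) // lerDl.
- by rewrite /ep ler_expR ler_pM2l // lerBlDr lerDl.
- exact: expR_ge0.
- by rewrite /em expR_le1 oppr_le0.
Qed.

Definition mean_bound : R := expR (lam * t) / lam + t.

Lemma mean_bound_ge0 : 0 <= mean_bound.
Proof. by rewrite addr_ge0 // divr_ge0 ?expR_ge0 // ltW. Qed.

Lemma mean_cst_le (k : nat) (x y u : R) : 0 <= u -> u <= t ->
  `|x| <= expR (lam * t) -> 0 <= y <= 1 ->
  `|k%:R * (x / (2 * lam) - (t - u) * y)| <= k%:R * mean_bound.
Proof.
move=> u0 ut hx /andP[y0 y1]; rewrite normrM ger0_norm // ler_wpM2l //.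
apply: le_trans (ler_normB _ _) _; rewrite /mean_bound lerD //.
  have l2 : 0 < 2 * lam by rewrite mulr_gt0.
  rewrite normrM normfV (gtr0_norm l2) ler_pdivrMr //.
  have -> : expR (lam * t) / lam * (2 * lam) = 2 * expR (lam * t).
    by field; rewrite ?lam_neq0.
  by have := expR_ge0 (lam * t); lra.
by rewrite normrM !ger0_norm ?subr_ge0 //; nra.
Qed.

Lemma mean_int_bounds k u : 0 <= u -> u <= t ->
  [/\ `|mean_int Cint k u| <= 1, `|mean_int Cpend k u| <= 1 &
      `|mean_int Ccst k u| <= k%:R * mean_bound].
Proof.
move=> u0 ut; have [/andP[p1 p2] /andP[m0 m1]] := ep_em_bounds u0 ut.
split; rewrite /mean_int ?normr1 //.
  by rewrite ger0_norm ?subr_ge0 //; lra.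
apply: mean_cst_le => //; last by apply/andP; lra.
by rewrite ler_norml; apply/andP; lra.
Qed.

Lemma mean_pend_bounds k u : 0 <= u -> u <= t ->
  [/\ `|mean_pend Cint k u| <= 1, `|mean_pend Cpend k u| <= 1 &
      `|mean_pend Ccst k u| <= k%:R * mean_bound].
Proof.
move=> u0 ut; have [/andP[p1 p2] /andP[m0 m1]] := ep_em_bounds u0 ut.
split; rewrite /mean_pend ?normr0 //; first by rewrite ger0_norm.
apply: mean_cst_le => //; last by apply/andP.
by rewrite ler_norml; apply/andP; lra.
Qed.

Lemma yule_I_closed :
  yule_I lam t = ((expR (lam * t) + expR (- (lam * t)) - 2) / lam)%:E.
Proof.
rewrite /yule_I (yule_expect_solution mean_bound_ge0 mean_int_solves mean_int_bounds).
  congr EFin; rewrite /eval_coefs /affine /mean_int /pendant !big_cons big_nil /ep /em.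
  by rewrite /= !subr0; field; rewrite ?lam_neq0.
move=> bs acc; congr EFin.
by rewrite /eval_coefs /affine /mean_int /ep /em subrr mulr0 oppr0 expR0; ring.
Qed.

Lemma yule_P_closed :
  yule_P lam t = ((expR (lam * t) - expR (- (lam * t))) / lam)%:E.
Proof.
rewrite /yule_P (yule_expect_solution mean_bound_ge0 mean_pend_solves mean_pend_bounds).
  congr EFin; rewrite /eval_coefs /affine /mean_pend /pendant !big_cons big_nil /ep /em.
  by rewrite /= !subr0; field; rewrite ?lam_neq0.
move=> bs acc; congr EFin.
by rewrite /eval_coefs /affine /mean_pend /pendant /ep /em subrr mulr0 oppr0 expR0; ring.
Qed.

End Yule.

Lemma yule_ratio_subr1 (R : realType) (lam t : R) : 0 < lam -> 0 < t ->
  yule_p lam t / yule_i lam t - 1 = expR (- (lam * t)).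
Proof.
move=> lam0 t0; rewrite /yule_p /yule_i.
rewrite (yule_P_closed _ _ _ lam0 (ltW t0)) (yule_I_closed _ _ _ lam0 (ltW t0)) /= expRN.
have a1 : 1 < expR (lam * t).
  by apply: lt_le_trans (expR_ge1Dx _); rewrite ltrDl mulr_gt0.
set a := expR (lam * t) in a1 *.
by field; apply/and4P; split; apply/eqP => h; nra.
Qed.

Theorem theorem4 (R : realType) (lam : R) (hlam : 0 < lam) :
  (forall t : R, 0 <= t ->
     yule_I lam t = ((expR (lam * t) + expR (- (lam * t)) - 2) / lam)%:E /\
     yule_P lam t = ((expR (lam * t) - expR (- (lam * t))) / lam)%:E) /\
  (exists C c : R, 0 < C /\ 0 < c /\
     forall t : R, 0 < t ->
       `| yule_p lam t / yule_i lam t - 1 | <= C * expR (- (c * t))).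
Proof.
split=> [t t0|]; first by split; [exact: yule_I_closed|exact: yule_P_closed].
exists 1, lam; do 2 split => //.
by move=> t t0; rewrite yule_ratio_subr1 // mul1r ger0_norm ?expR_ge0.
Qed.
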